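(* Let $n\geq 3$, let $\mathcal{F}$ be a maximal coclique of $\Gamma_{2n}$, and let $B$ be an $\mathcal{F}$-yellow $n$-space of $\mathrm{PG}(2n,q)$. Then the number of flags $(A',B')\in \mathcal{F}$ with pairwise distinct $n$-spaces $B'$ and with $A'\cap B=\emptyset$ (equivalently, the number of $n$-spaces $B'$ for which some $(A',B')\in\mathcal{F}$ has $A'\cap B=\emptyset$) is $\mathcal{O}(q^{n^2-1})$.
   Context: $\mathrm{PG}(2n,q)$ is the projective space of projective dimension $2n$ over the field of order $q$; an $i$-space is a subspace of projective dimension $i$. An $(n-1,n)$-flag is a pair $(A,B)$ with $A$ an $(n-1)$-space, $B$ an $n$-space and $A\subseteq B$. Two such flags $(A_1,B_1),(A_2,B_2)$ are opposite if $A_1\cap B_2=A_2\cap B_1=\emptyset$. $\Gamma_{2n}$ is the graph whose vertices are the $(n-1,n)$-flags, adjacent when opposite; a maximal coclique is an inclusion-maximal set of pairwise non-opposite flags. An $n$-space is $\mathcal{F}$-yellow if it occurs in at least $1$ and at most $\frac{q^{n}-1}{q-1}$ flags of $\mathcal{F}$. $\mathcal{O}(q^m)$ means bounded above by $Cq^m$ with $C$ depending only on $n$. *)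

From HB Require Import structures.
From mathcomp Require Import all_boot all_order all_algebra all_field.
Set Implicit Arguments. Unset Strict Implicit. Unset Printing Implicit Defensive.
Import GRing.Theory.
Local Open Scope ring_scope.

(* Subspaces of a finite-dimensional vector space over a finite field form a
   finite type (needed to count flags / subspaces). *)
Section FinVspace.
Import VectorInternalTheory.
Variables (K : finFieldType) (vT : vectType K).
HB.instance Definition _ := [Countable of {vspace vT} by <:].
HB.instance Definition _ := [Finite of {vspace vT} by <:].
End FinVspace.

Section Flags.
Variables (K : finFieldType) (n : nat).

(* The underlying vector space of PG(2n, q): row vectors of length 2n+1. *)
Definition V := 'rV[K]_(n.*2.+1).
Definition subsp := {vspace V}.

(* Projective i-space = vector subspace of dimension i+1.
   An (n-1,n)-flag (A,B): A an (n-1)-space, B an n-space, A <= B. *)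
Definition is_flag (f : subsp * subsp) : bool :=
  [&& \dim f.1 == n, \dim f.2 == n.+1 & (f.1 <= f.2)%VS].

(* Projective disjointness = trivial vector intersection. *)
Definition disjoint_sp (X Y : subsp) : bool := (X :&: Y)%VS == 0%VS.

Definition opposite (f g : subsp * subsp) : bool :=
  disjoint_sp f.1 g.2 && disjoint_sp g.1 f.2.

Definition coclique (F : {set subsp * subsp}) : bool :=
  [forall f in F, is_flag f] &&
  [forall f in F, forall g in F, ~~ opposite f g].

Definition max_coclique (F : {set subsp * subsp}) : bool :=
  coclique F &&
  [forall g, (is_flag g && [forall f in F, ~~ opposite f g]) ==> (g \in F)].

Definition nflags_on (F : {set subsp * subsp}) (B : subsp) : nat :=
  #|[set f in F | f.2 == B]|.

Definition yellow (F : {set subsp * subsp}) (B : subsp) : bool :=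
  [&& \dim B == n.+1, 0 < nflags_on F B &
      nflags_on F B <= (#|K| ^ n - 1) %/ (#|K| - 1)]%N.

Definition far_spaces (F : {set subsp * subsp}) (B : subsp) : {set subsp} :=
  [set B' : subsp | [exists A' : subsp, ((A', B') \in F) && disjoint_sp A' B]].

End Flags.

(* Let (A0, B) be a flag of F; one exists because B is yellow. If (A', B') is in F
   with A' disjoint from B, then (A0, B) and (A', B') are not opposite, so B'
   meets A0; and A' + (B' :&: B) lies in B', so B' :&: B is at most a point.
   Hence B' :&: B is one of the O(q^(n-1)) points P of A0.
   For a fixed P, two such spaces B1 and B2 cannot meet inside B (their flags
   would be opposite), so they meet in at least a line. Cutting with a
   hyperplane Wc complementary to P turns them into pairwise intersecting
   complements of W := B :&: Wc in the 2n-dimensional space Wc. These are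
   graphs of linear maps between two copies of GF(q^n) with pairwise singular
   differences, hence distinct modulo the n-dimensional space of
   multiplications by elements of GF(q^n): there are at most q^(n^2 - n). *)

From HB Require Import structures.
From mathcomp Require Import all_boot all_order all_algebra all_field.
From mathcomp Require Import ring zify.
Set Implicit Arguments. Unset Strict Implicit. Unset Printing Implicit Defensive.
Import GRing.Theory.
Local Open Scope ring_scope.

Lemma natr_card_finNzRing (R : finNzRingType) : #|R|%:R = 0 :> R.
Proof.
have : \sum_(x : R) (1 + x) = 0 + \sum_(x : R) x.
  by rewrite add0r [RHS](reindex_inj (addrI 1)).
by rewrite big_split sumr_const cardT -cardE => /addIr.
Qed.

Lemma separable_XnsubX (R : idomainType) m :
  m%:R = 0 :> R -> separable_poly ('X^m - 'X : {poly R}).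
Proof.
move=> m0; rewrite unlock derivB derivXn derivX -mulr_natl.
rewrite -polyC_natr m0 mul0r sub0r -[-1]scaleN1r.
by rewrite coprimepZr ?coprimep1 ?oppr_eq0 ?oner_eq0.
Qed.

Lemma card_finvect (K : finFieldType) (vT : vectType K) :
  #|finvect_type vT| = (#|K| ^ \dim {:vT})%N.
Proof. by rewrite -(card_vspacef (Vector.class (finvect_type vT))) card_vspace. Qed.

Lemma adjoin_seq_fixed_pow (K : finFieldType) (L : splittingFieldType K)
    (zs : seq L) k :
  {in zs, forall z, z ^+ (#|K| ^ k) = z} ->
  {in <<1 & zs>>%VS, forall x, x ^+ (#|K| ^ k) = x}.
Proof.
move=> zs_fixed x; have [a _ a_frob] := finField_galois_generator (sub1v {:L}).
have ak_pow y : (a ^+ k)%g y = y ^+ (#|K| ^ k).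
  elim: k {zs_fixed} => [|i IHi]; first by rewrite gal_id.
  by rewrite expgSr expnSr exprM galM ?memvf // IHi a_frob ?memvf // dimv1 expn1.
have : (<<1 & zs>> <= fixedField [set (a ^+ k)%g])%VS.
  apply/Fadjoin_seqP; split=> [|z /zs_fixed zk]; first exact: sub1v.
  by apply/fixedFieldP; rewrite ?memvf // => _ /set1P ->; rewrite ak_pow.
move=> /subvP sub /sub /fixedFieldP.
by move/(_ (memvf x) _ (set11 _)); rewrite ak_pow.
Qed.

(* L is the splitting field of X^(q^k) - X, a separable polynomial whose roots
   exhaust L. *)
Lemma fieldExt_of_dim (K : finFieldType) k :
  (0 < k)%N -> {L : fieldExtType K | \dim {:L} = k}.
Proof.
move=> k_gt0; set m := (#|K| ^ k)%N.
have q_gt1 : (1 < #|K|)%N := finNzRing_gt1 K.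
have size_f (R : nzRingType) : size ('X^m - 'X : {poly R}) = m.+1.
  by rewrite size_polyDl ?size_polyXn // size_polyN size_polyX ltnS (ltn_exp2l 0).
have /FinSplittingFieldFor[L splitL] : ('X^m - 'X : {poly K}) != 0.
  by rewrite -size_poly_gt0 size_f.
exists L; have [zs f_zs L_zs] := splitL.
rewrite rmorphB rmorphXn /= map_polyX in f_zs.
have root_zs x : (x \in zs) = (x ^+ m == x).
  by rewrite -root_prod_XsubC -(eqp_root f_zs) /root !hornerE subr_eq0.
have L_zs_eq : finvect_type L =i zs.
  move=> x; rewrite root_zs (@adjoin_seq_fixed_pow _ _ zs k) ?eqxx ?L_zs ?memvf //.
  by move=> z; rewrite root_zs => /eqP.
have uniq_zs : uniq zs.
  rewrite -separable_prod_XsubC -(eqp_separable f_zs) separable_XnsubX //.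
  rewrite -(rmorph_nat (in_alg L)) natrX natr_card_finNzRing.
  by rewrite expr0n gtn_eqF ?rmorph0.
apply/eqP; rewrite -(eqn_exp2l _ _ q_gt1) -card_finvect (eq_card L_zs_eq).
rewrite (@card_uniqP (finvect_type L) zs uniq_zs) -/m.
by rewrite -(eqn_add2r 1) !addn1 -(size_prod_XsubC _ id) -(eqp_size f_zs) size_f.
Qed.

Section LinearAlgebra.
Variables (K : fieldType) (vT : vectType K).
Implicit Types P X Y : {vspace vT}.

Lemma lfun_onto_of_dim (aT : vectType K) X :
  \dim {:aT} = \dim X -> {f : 'Hom(aT, vT) | lker f == 0%VS & limg f = X}.
Proof.
move=> dimX; have [f fK] := linear_of_free (vbasis {:aT}) (vbasis X).
have limgX : limg (linfun f) = X.
  rewrite -(span_basis (vbasisP fullv)) limg_span (eq_map (lfunE _)).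
  by rewrite fK ?size_tuple ?(basis_free (vbasisP _)) // (span_basis (vbasisP X)).
exists (linfun f) => //; have := limg_ker_dim (linfun f) fullv.
rewrite capfv limgX -dimX => /eqP.
by rewrite -[X in _ == X]add0n eqn_add2r dimv_eq0.
Qed.

Lemma dimv_cap_compl_sub P Y :
  (P <= Y)%VS -> (\dim (Y :&: P^C) + \dim P)%N = \dim Y.
Proof.
move=> PY; have := dimv_sum_cap Y P^C; rewrite dimv_compl.
have -> : (Y + P^C)%VS = fullv.
  by apply/eqP; rewrite eqEsubv subvf -(addv_complf P) addvS.
have := dimvS (subvf P); lia.
Qed.

Lemma addv_cap_compl_sub P Y : (P <= Y)%VS -> (P + Y :&: P^C)%VS = Y.
Proof.
move=> PY; apply/eqP; rewrite eqEdim subv_add PY capvSl /=.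
rewrite dimv_disjoint_sum; first by rewrite addnC dimv_cap_compl_sub ?leqnn.
by apply/eqP; rewrite -subv0 -(capv_compl P) capvS ?capvSr.
Qed.

Lemma dim1_vline P x : \dim P = 1%N -> x \in P -> x != 0 -> P = <[x]>%VS.
Proof.
move=> dimP Px x_neq0; apply/eqP.
by rewrite eq_sym eqEdim -memvE Px dimP dim_vline x_neq0.
Qed.
End LinearAlgebra.

Section GraphMap.
Variables (K : fieldType) (aT bT vT : vectType K).
Variables (al : 'Hom(aT, vT)) (be : 'Hom(bT, vT)).
Hypothesis be_inj : lker be == 0%VS.
Implicit Types X Y : {vspace vT}.

Definition graph_map X : 'Hom(aT, bT) :=
  (be^-1 \o daddv_pi (limg be) X \o al)%VF.

Section Complement.
Variable X : {vspace vT}.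
Hypothesis XW : (X :&: limg be = 0)%VS.
Hypothesis XS : (X + limg be = limg al + limg be)%VS.

Lemma graph_mapP x : al x - be (graph_map X x) \in X.
Proof.
have alxS : al x \in (limg be + X)%VS.
  by rewrite addvC XS (subvP (addvSl _ _)) // memv_img ?memvf.
have WX : (limg be :&: X = 0)%VS by rewrite capvC.
rewrite !comp_lfunE limg_lfunVK ?memv_pi //.
by rewrite -{1}(daddv_pi_add WX alxS) addrAC subrr add0r memv_pi.
Qed.

Lemma graph_map_uniq x y : al x - be y \in X -> graph_map X x = y.
Proof.
move=> Xxy; have : be y - be (graph_map X x) \in (X :&: limg be)%VS.
  rewrite memv_cap [X in _ && X]memvB ?memv_img ?memvf // andbT.
  suff -> : be y - be (graph_map X x) = al x - be (graph_map X x) - (al x - be y).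
    by rewrite memvB ?graph_mapP.
  by rewrite opprB [RHS]addrC addrA subrK.
by rewrite XW memv0 subr_eq0 => /eqP /(lker0P be_inj).
Qed.

Lemma limg_graph_map : limg (al - (be \o graph_map X))%VF = X.
Proof.
apply/eqP; rewrite eqEsubv; apply/andP; split; apply/subvP => w.
  case/memv_imgP => x _ ->.
  by rewrite add_lfunE opp_lfunE comp_lfunE graph_mapP.
move=> Xw; have : w \in (limg al + limg be)%VS.
  by rewrite -XS (subvP (addvSl _ _)).
case/memv_addP => _ /memv_imgP [x _ ->] [_ /memv_imgP [y _ ->] Ew].
have Gx : graph_map X x = - y by apply: graph_map_uniq; rewrite linearN opprK -Ew.
apply/memv_imgP; exists x; first exact: memvf.
by rewrite Ew add_lfunE opp_lfunE comp_lfunE Gx linearN opprK.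
Qed.
End Complement.

Lemma lker_graph_mapB X Y :
    (X :&: limg be = 0)%VS -> (X + limg be = limg al + limg be)%VS ->
    (Y :&: limg be = 0)%VS -> (Y + limg be = limg al + limg be)%VS ->
  (X :&: Y != 0)%VS -> lker (graph_map X - graph_map Y) != 0%VS.
Proof.
move=> XW XS YW YS XY; set w := vpick (X :&: Y)%VS.
have w_neq0 : w != 0 by rewrite vpick0.
have /memv_capP[wX wY] : w \in (X :&: Y)%VS := memv_pick _.
have : w \in (limg al + limg be)%VS by rewrite -XS (subvP (addvSl _ _)).
case/memv_addP => _ /memv_imgP [x _ ->] [_ /memv_imgP [y _ ->] Ew].
have Gx Z : (Z :&: limg be = 0)%VS -> (Z + limg be = limg al + limg be)%VS ->
    w \in Z -> graph_map Z x = - y.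
  by move=> ZW ZS Zw; apply: graph_map_uniq; rewrite // linearN opprK -Ew.
apply/eqP => /eqP; rewrite -subv0 => /subvP /(_ x).
rewrite memv_ker add_lfunE opp_lfunE !Gx // subrr eqxx memv0.
move=> /(_ isT) /eqP x0; have : w \in (X :&: limg be)%VS.
  by rewrite memv_cap wX Ew x0 linear0 add0r memv_img ?memvf.
by rewrite XW memv0 (negPf w_neq0).
Qed.
End GraphMap.

Section SingularDifferences.
Variables (K : finFieldType) (L : fieldExtType K) (k : nat).
Hypothesis dimL : \dim {:L} = k.+1.

Let e := vbasis {:L}.
Let e0 := e`_0.

Let e0_neq0 : e0 != 0.
Proof.
by apply: (basis_not0 (vbasisP _)); apply: mem_nth; rewrite size_tuple dimL.
Qed.

(* [code h] records [h - amull (h e0 / e0)], which vanishes at [e0], on the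
   rest of the basis; it determines [h] up to a multiplication [amull c]. *)
Let code (h : 'End(L)) : {ffun 'I_k -> finvect_type L} :=
  [ffun j : 'I_k => h e`_j.+1 - h e0 / e0 * e`_j.+1 : finvect_type L].

Let code_eq g h : code g = code h -> g - h = amull ((g e0 - h e0) / e0).
Proof.
move=> gh; apply/lfunP => x; move: x (memvf x).
rewrite -(span_basis (vbasisP {:L})).
apply/(span_lfunP e) => _ /(nthP 0) [[|j] lt_j <-].
  by rewrite add_lfunE opp_lfunE lfunE /= divfK.
have lt_jk : (j < k)%N by rewrite -ltnS -dimL -(size_tuple e).
have := congr1 (fun c : {ffun _} => c (Ordinal lt_jk)) gh.
rewrite !ffunE /= => /eqP.
by rewrite subr_eq add_lfunE opp_lfunE lfunE /= => /eqP ->; ring.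
Qed.

Lemma card_pairwise_singular (T : finType) (A : {set T}) (g : T -> 'End(L)) :
    {in A &, injective g} -> {in A &, forall i j, lker (g i - g j) != 0%VS} ->
  (#|A| <= #|K| ^ (k.+1 * k))%N.
Proof.
move=> g_inj g_sing; have code_inj : {in A &, injective (code \o g)}.
  move=> i j Ai Aj /code_eq gij; apply: g_inj => //; apply/eqP.
  rewrite -subr_eq0 gij; set c := _ / e0.
  have [-> | c_neq0] := eqVneq c 0; first by rewrite linear0.
  have /negP[] : lker (amull c) != 0%VS by rewrite -gij g_sing.
  by apply/lker0P => x y; rewrite !lfunE /=; apply: mulfI.
rewrite -(card_in_imset code_inj); apply: leq_trans (max_card _) _.
by rewrite card_ffun card_ord card_finvect dimL -expnM.
Qed.

End SingularDifferences.

Lemma card_pairwise_meeting_complements (K : finFieldType) (vT : vectType K)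
    (S W : {vspace vT}) k (Phi : {set {vspace vT}}) :
    (W <= S)%VS -> \dim W = k.+1 -> \dim S = k.+1.*2 ->
    {in Phi, forall X, (X :&: W = 0)%VS /\ (X + W = S)%VS} ->
    {in Phi &, forall X Y, (X :&: Y != 0)%VS} ->
  (#|Phi| <= #|K| ^ (k.+1 * k))%N.
Proof.
move=> WS dimW dimS complPhi meetPhi.
have [L dimL] := fieldExt_of_dim K (ltn0Sn k).
have [be be_inj limg_be] := @lfun_onto_of_dim _ _ L W (etrans dimL (esym dimW)).
have dimSW : \dim {:L} = \dim (S :\: W).
  by have := dimv_cap_compl S W; rewrite (capv_idPr WS) dimL dimW dimS; lia.
have [al _ limg_al] := @lfun_onto_of_dim _ _ L (S :\: W) dimSW.
have limgS : (limg al + limg be)%VS = S.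
  by rewrite limg_al limg_be addv_diff; apply/addv_idPl.
rewrite -limgS -limg_be in complPhi.
apply: (card_pairwise_singular dimL (g := graph_map al be)).
  move=> X Y /complPhi[XW XS] /complPhi[YW YS] GXY.
  by rewrite -(limg_graph_map be_inj XW XS) GXY limg_graph_map.
move=> X Y XPhi YPhi; have [XW XS] := complPhi X XPhi.
have [YW YS] := complPhi Y YPhi.
by have := lker_graph_mapB be_inj XW XS YW YS (meetPhi X Y XPhi YPhi).
Qed.

Section Points.
Variables (K : finFieldType) (m : nat).
Local Notation vT := 'rV[K]_m.

Definition points (A : {vspace vT}) : {set {vspace vT}} :=
  [set P | (\dim P == 1%N) && (P <= A)%VS].

Lemma card_points (A : {vspace vT}) :
  (#|points A| * (#|K| - 1) <= #|K| ^ \dim A)%N.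
Proof.
pose units := [set a : K | a != 0].
have card_units : #|units| = (#|K| - 1)%N.
  by rewrite subn1 -(cardsC1 0); apply: eq_card => a; rewrite !inE.
pose f (Pa : {vspace vT} * K) : vT := Pa.2 *: vpick Pa.1.
have fP Pa : Pa \in setX (points A) units ->
    [/\ f Pa \in A, f Pa != 0 & Pa.1 = <[f Pa]>%VS].
  case: Pa => P a /setXP [] /[!inE] /andP [/eqP dimP PA] a_neq0.
  have fP : f (P, a) \in P by rewrite memvZ ?memv_pick.
  have f_neq0 : f (P, a) != 0.
    by rewrite scaler_eq0 negb_or a_neq0 vpick0 -dimv_eq0 dimP.
  by split; [exact: subvP PA _ fP | | exact: dim1_vline dimP fP f_neq0].
have f_inj : {in setX (points A) units &, injective f}.
  move=> [P a] [Q b] /fP [_ f_neq0 /= PE] /fP [_ _ /= QE] fE.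
  have PQ : P = Q by rewrite PE QE fE.
  move: f_neq0 fE; rewrite /f /= PQ scaler_eq0 negb_or => /andP [_ vQ_neq0] /eqP.
  by rewrite -subr_eq0 -scalerBl scaler_eq0 (negPf vQ_neq0) orbF subr_eq0 => /eqP ->.
rewrite -card_units -cardsX -(card_in_imset f_inj) -card_vspace.
by apply: subset_leq_card; apply/subsetP => _ /imsetP [Pa /fP [fA _ _] ->].
Qed.
End Points.

Section Cocliques.
Variables (K : finFieldType) (n : nat) (F : {set subsp K n * subsp K n}).
Hypothesis coF : coclique F.

Lemma coclique_flag f :
  f \in F -> [/\ \dim f.1 = n, \dim f.2 = n.+1 & (f.1 <= f.2)%VS].
Proof.
by case/andP: coF => /forall_inP flagF _ /flagF /and3P [/eqP -> /eqP -> ->].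
Qed.

Lemma coclique_not_opposite f g : f \in F -> g \in F -> ~~ opposite f g.
Proof. by case/andP: coF => _ /forall_inP nopF /nopF /forall_inP; apply. Qed.

Lemma far_spacesP B B' :
  reflect (exists2 A', (A', B') \in F & (A' :&: B = 0)%VS) (B' \in far_spaces F B).
Proof.
rewrite inE; apply: (iffP existsP) => [[A' /andP [A'F /eqP A'B]] | [A' A'F A'B]].
  by exists A'.
by exists A'; rewrite A'F; apply/eqP.
Qed.

Lemma far_space_cap A0 B B' :
  (A0, B) \in F -> B' \in far_spaces F B -> (B' :&: B)%VS \in points A0.
Proof.
move=> A0F /far_spacesP [A' A'F A'B]; have [dimA' dimB' A'B'] := coclique_flag A'F.
have [_ _ /= A0B] := coclique_flag A0F.
have A0B' : (A0 :&: B' != 0)%VS.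
  have := coclique_not_opposite A0F A'F.
  by rewrite /opposite /disjoint_sp /= A'B eqxx andbT.
have dim_cap : (\dim (B' :&: B) <= 1)%N.
  have : (\dim (A' + B' :&: B) <= n.+1)%N.
    by rewrite -dimB' dimvS // subv_add A'B' capvSl.
  rewrite dimv_disjoint_sum ?dimA'; first lia.
  by apply/eqP; rewrite -subv0 -A'B capvS // capvSr.
have capE : (A0 :&: B')%VS = (B' :&: B)%VS.
  apply/eqP; rewrite eqEdim capvC capvS //=.
  by rewrite (leq_trans dim_cap) // lt0n dimv_eq0 capvC.
rewrite inE -{2}capE capvSl andbT eqn_leq dim_cap -capE lt0n dimv_eq0 A0B'.
done.
Qed.

Lemma far_spaces_cap_not_sub B B1 B2 :
  B1 \in far_spaces F B -> B2 \in far_spaces F B -> ~~ (B1 :&: B2 <= B)%VS.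
Proof.
move=> /far_spacesP [A1 A1F A1B] /far_spacesP [A2 A2F A2B]; apply/negP => B12B.
have [_ _ /= A1B1] := coclique_flag A1F; have [_ _ /= A2B2] := coclique_flag A2F.
have disj A Bi Bj : (A <= Bi)%VS -> (A :&: B = 0)%VS -> (Bi :&: Bj <= B)%VS ->
    disjoint_sp A Bj.
  move=> ABi AB BijB; rewrite /disjoint_sp -subv0 -AB subv_cap capvSl /=.
  exact: subv_trans (capvS ABi (subvv Bj)) BijB.
have := coclique_not_opposite A1F A2F.
by rewrite /opposite /= (disj A1 B1) // (disj A2 B2) // capvC.
Qed.

Lemma far_spaces_cap_gt1 B P B1 B2 :
    \dim P = 1%N -> B1 \in far_spaces F B -> B2 \in far_spaces F B ->
    (B1 :&: B)%VS = P -> (B2 :&: B)%VS = P ->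
  (1 < \dim (B1 :&: B2))%N.
Proof.
move=> dimP far1 far2 B1B B2B; rewrite ltnNge.
apply: contra (far_spaces_cap_not_sub far1 far2) => dim_le1.
have PB12 : (P <= B1 :&: B2)%VS by rewrite subv_cap -{1}B1B -B2B !capvSl.
suff <- : P = (B1 :&: B2)%VS by rewrite -B1B capvSr.
by apply/eqP; rewrite eqEdim PB12 dimP.
Qed.

End Cocliques.

Lemma dim_full (K : finFieldType) n : \dim (fullv : subsp K n) = n.*2.+1.
Proof. by rewrite dimvf /dim /= mul1n. Qed.

Section FarSpacesCount.
Variables (K : finFieldType) (k : nat) (F : {set subsp K k.+1 * subsp K k.+1}).
Hypothesis coF : coclique F.

Lemma card_far_spaces_through (B P : subsp K k.+1) :
    \dim B = k.+2 -> \dim P = 1%N -> (P <= B)%VS ->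
  (#|[set B' in far_spaces F B | (B' :&: B)%VS == P]| <= #|K| ^ (k.+1 * k))%N.
Proof.
move=> dimB dimP PB; set Fam := [set B' in _ | _].
have FamP B' : B' \in Fam ->
    [/\ B' \in far_spaces F B, \dim B' = k.+2 & (B' :&: B)%VS = P].
  rewrite inE => /andP [farB' /eqP B'B]; split=> //.
  by have /far_spacesP [A' /(coclique_flag coF) [_ ->]] := farB'.
have PB' B' : B' \in Fam -> (P <= B')%VS by case/FamP => _ _ <-; apply: capvSl.
set Wc := (P^C)%VS.
have dimWc : \dim Wc = k.+1.*2 by rewrite dimv_compl dim_full dimP subn1.
have dim_capWc Y : (P <= Y)%VS -> \dim (Y :&: Wc) = (\dim Y).-1.
  by move/dimv_cap_compl_sub; rewrite dimP addn1 => <-.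
have inj : {in Fam &, injective (fun B' => B' :&: Wc)%VS}.
  move=> B1 B2 F1 F2 /= E.
  by rewrite -(addv_cap_compl_sub (PB' _ F1)) E addv_cap_compl_sub ?PB'.
rewrite -(card_in_imset inj).
apply: (card_pairwise_meeting_complements (S := Wc) (W := B :&: Wc)).
- exact: capvSr.
- by rewrite dim_capWc ?dimB.
- exact: dimWc.
- move=> _ /imsetP [B' FamB' ->]; have [_ dimB' B'B] := FamP _ FamB'.
  have capW0 : (B' :&: Wc :&: (B :&: Wc) = 0)%VS.
    apply/eqP; rewrite -subv0 -(capv_compl P) subv_cap.
    rewrite (subv_trans (capvSr _ _) (capvSr _ _)) andbT -[X in (_ <= X)%VS]B'B.
    exact: capvS (capvSl _ _) (capvSl _ _).
  split=> //; apply/eqP; rewrite eqEdim subv_add !capvSr /= dimWc.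
  rewrite dimv_disjoint_sum // (dim_capWc _ (PB' _ FamB')) (dim_capWc _ PB).
  by rewrite dimB dimB' addnn.
move=> _ _ /imsetP [B1 F1 ->] /imsetP [B2 F2 ->].
have [far1 _ B1B] := FamP _ F1; have [far2 _ B2B] := FamP _ F2.
have dimB12 := far_spaces_cap_gt1 coF dimP far1 far2 B1B B2B.
rewrite -dimv_eq0 -lt0n; apply: leq_trans (dimvS (_ : (B1 :&: B2) :&: Wc <= _)%VS).
  by rewrite dim_capWc ?subv_cap ?PB' // -ltnS (ltn_predK dimB12).
by rewrite subv_cap !capvS ?capvSl ?capvSr.
Qed.

Lemma card_far_spaces (A0 B : subsp K k.+1) :
  (A0, B) \in F -> (#|far_spaces F B| <= #|points A0| * #|K| ^ (k.+1 * k))%N.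
Proof.
move=> A0F; have [_ dimB /= A0B] := coclique_flag coF A0F.
rewrite -sum1_card (partition_big (fun B' => B' :&: B)%VS (mem (points A0))) /=.
  rewrite -sum_nat_const; apply: leq_sum => P /[!inE] /andP [/eqP dimP PA0].
  rewrite sum1dep_card; apply: leq_trans (card_far_spaces_through dimB dimP _).
    by apply: subset_leq_card; apply/subsetP => B'; rewrite !inE.
  exact: subv_trans PA0 A0B.
by move=> B' /(far_space_cap coF A0F).
Qed.

End FarSpacesCount.

Theorem mainTheorem10 :
  forall n : nat, (3 <= n)%N ->
  exists C : nat,
  forall (K : finFieldType) (F : {set subsp K n * subsp K n}) (B : subsp K n),
    max_coclique F -> yellow F B ->
    (#|far_spaces F B| <= C * #|K| ^ (n ^ 2 - 1))%N.
Proof.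
case=> [//|k] _; exists 2 => K F B /andP [coF _] /and3P [_ + _].
rewrite /nflags_on card_gt0 => /set0Pn [[A0 B0]] /[!inE] /andP [A0F /eqP /= B0B].
subst B0; have [dimA0 _ _] := coclique_flag coF A0F.
apply: leq_trans (card_far_spaces coF A0F) _.
have q_gt1 : (1 < #|K|)%N := finNzRing_gt1 K.
have card_pts : (#|points A0| <= 2 * #|K| ^ k)%N.
  have := card_points A0; rewrite dimA0 expnS.
  move: (#|points A0|) (#|K| ^ k)%N q_gt1 => t r; move: (#|K|) => q; nia.
have -> : (k.+1 ^ 2 - 1 = k + k.+1 * k)%N by lia.
by rewrite expnD mulnA leq_mul2r card_pts orbT.
Qed.
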